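(* Let $\mathcal P=\{P_1,\dots,P_K\}$ be a finite collection of prototiles, with $P_k=\{0=p_{k,1}<p_{k,2}<\dots<p_{k,\ell_k}\}$. Then the subscripted tiling system $\widetilde T(\mathcal P)$ is a shift of finite type. More precisely, if $L$ is the maximal length $p_{k,\ell_k}+1$ of a prototile in $\mathcal P$, then a point $x\in\prod_{i\in\mathbb Z}\{(k,\ell):1\le k\le K,1\le \ell\le \ell_k\}$ belongs to $\widetilde T(\mathcal P)$ whenever every block of $L$ consecutive symbols occurring in $x$ occurs in some point of $\widetilde T(\mathcal P)$.
   Context: A prototile is a finite nonempty subset of $\mathbb Z$ with minimum $0$. The subscripted tiling system $\widetilde T(\mathcal P)$ is the set of points $x\in\prod_{i\in\mathbb Z}\{(k,\ell):1\le k\le K,\ 1\le\ell\le\ell_k\}$ such that there is a tiling $\mathbb Z=\bigcup_j(t_j+P_{k_j})$ of $\mathbb Z$ as a disjoint union of translates of prototiles with the property that for every $i$ there are $j$ and $\ell$ with $i\in t_j+P_{k_j}$ (namely $i=t_j+p_{k_j,\ell}$) and $x_i=(k_j,\ell)$. Equivalently, $x\in\widetilde T(\mathcal P)$ iff for every $i$, $x_i=(k,\ell)$ and $1\le\ell'\le\ell_k$ imply $x_{i+p_{k,\ell'}-p_{k,\ell}}=(k,\ell')$. It is considered with the shift $(\sigma x)_i=x_{i+1}$. *)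

From mathcomp Require Import all_boot all_order all_algebra.
Set Implicit Arguments. Unset Strict Implicit. Unset Printing Implicit Defensive.
Import Order.TTheory GRing.Theory Num.Theory.
Local Open Scope ring_scope.

(* Prototiles P_1..P_K are indexed by k : 'I_K (0-based); P k is the
   increasing list [:: p_{k,1}; ...; p_{k,l_k}] with p_{k,1} = 0.
   Symbols (k,l) use 0-based l : l < size (P k). *)
Definition prototiles_ok (K : nat) (P : 'I_K -> seq nat) : Prop :=
  forall k : 'I_K, [/\ P k != [::], head 1%N (P k) = 0%N & sorted ltn (P k)].

Definition in_alphabet (K : nat) (P : 'I_K -> seq nat) (a : 'I_K * nat) : Prop :=
  (a.2 < size (P a.1))%N.

Definition tile_covers (K : nat) (P : 'I_K -> seq nat) (S : 'I_K * int -> Prop)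
  (i : int) (k : 'I_K) (t : int) (l : nat) : Prop :=
  [/\ S (k, t), (l < size (P k))%N & i = t + (nth 0%N (P k) l)%:Z].

(* S (a set of tiles t + P_k, coded as pairs (k,t)) is a tiling: Z is the
   disjoint union of its tiles, i.e. every integer lies in exactly one tile. *)
Definition is_tiling (K : nat) (P : 'I_K -> seq nat) (S : 'I_K * int -> Prop) : Prop :=
  forall i : int, exists! ktl : 'I_K * int * nat,
    tile_covers P S i ktl.1.1 ktl.1.2 ktl.2.

Definition subscripted_tiling (K : nat) (P : 'I_K -> seq nat)
  (x : int -> 'I_K * nat) : Prop :=
  exists S : 'I_K * int -> Prop, is_tiling P S /\
    forall i : int, exists (k : 'I_K) (t : int) (l : nat),
      tile_covers P S i k t l /\ x i = (k, l).

Definition block (T : Type) (x : int -> T) (i : int) (n : nat) : seq T :=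
  [seq x (i + j%:Z) | j <- iota 0 n].

Definition max_len (K : nat) (P : 'I_K -> seq nat) : nat :=
  (\max_(k < K) (last 0%N (P k)).+1)%N.

Definition is_SFT (T : eqType) (A : T -> Prop) (X : (int -> T) -> Prop) : Prop :=
  exists (N : nat) (W : seq (seq T)), forall x : int -> T, (forall i, A (x i)) ->
    (X x <-> forall i : int, block x i N \in W).

(* A point x of the tiling system is characterised by a local consistency rule:
   whenever x_i = (k,l), the whole tile i - p_{k,l} + P_k carries the subscripts
   (k,1),...,(k,l_k).  Any two positions of one tile are less than L apart, so they
   lie in a common L-block; if that block occurs in a point y of the system, the
   rule for y transfers to x.  Conversely, the rule lets one read the tiling off x:
   its tiles are the translates i + P_k with x_i = (k,1). *)

From mathcomp Require Import all_boot all_order all_algebra.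
From Stdlib Require Import ClassicalEpsilon.
Set Implicit Arguments. Unset Strict Implicit. Unset Printing Implicit Defensive.
Import GRing.Theory.
Local Open Scope ring_scope.

Lemma nth_block (T : Type) (d : T) (x : int -> T) i n j : (j < n)%N ->
  nth d (block x i n) j = x (i + j%:Z).
Proof. by move=> ltjn; rewrite /block (nth_map 0%N) ?size_iota // nth_iota. Qed.

Fixpoint words (T : Type) (A : seq T) (n : nat) : seq (seq T) :=
  if n is n'.+1 then [seq a :: w | a <- A, w <- words A n'] else [:: [::]].

Lemma words_complete (T : eqType) (A : seq T) (w : seq T) :
  all (mem A) w -> w \in words A (size w).
Proof.
elim: w => [|a w IHw] //= /andP [Aa Aw].
by apply/allpairsPdep; exists a, w; rewrite IHw.
Qed.

Lemma is_SFT_of_block_rule (T : eqType) (A : T -> Prop) (X : (int -> T) -> Prop)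
    (alphabet : seq T) (N : nat) :
  (forall a, A a -> a \in alphabet) ->
  (forall x, (forall i, A (x i)) ->
     (forall i, exists y m, X y /\ block y m N = block x i N) -> X x) ->
  is_SFT A X.
Proof.
move=> finA blockX.
pose allowed w := exists y m, X y /\ block y m N = w.
pose W := [seq w <- words alphabet N | if excluded_middle_informative (allowed w)
                                         then true else false].
exists N, W => x Ax; split.
- move=> Xx i; rewrite mem_filter; apply/andP; split.
    by case: excluded_middle_informative => // -[]; exists x, i.
  have := words_complete (w := block x i N); rewrite size_map size_iota; apply.
  by apply/allP => _ /mapP [j _ ->]; apply: finA.
- move=> WX; apply: blockX => // i.
  by move: (WX i); rewrite mem_filter; case: excluded_middle_informative.
Qed.

Section SubscriptedTiling.
Variables (K : nat) (P : 'I_K -> seq nat).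

Definition subscript_consistent (x : int -> 'I_K * nat) : Prop :=
  forall i (k : 'I_K) l l', x i = (k, l) -> (l' < size (P k))%N ->
    x (i - (nth 0%N (P k) l)%:Z + (nth 0%N (P k) l')%:Z) = (k, l').

Lemma subscripted_tiling_consistent x :
  subscripted_tiling P x -> subscript_consistent x.
Proof.
move=> [S [tilingS coverS]] i k l l' xi ltl'.
have [k0 [t [l0 [[St _ ei] xi0]]]] := coverS i.
move: xi0; rewrite xi => -[ek el]; subst k0 l0; rewrite ei addrK.
set j := t + _.
have [k1 [t1 [l1 [covj ->]]]] := coverS j.
have [u [_ uniq_j]] := tilingS j.
have := uniq_j ((k, t), l') (And3 St ltl' erefl).
by rewrite (uniq_j ((k1, t1), l1) covj) => -[<- _ <-].
Qed.

Hypothesis okP : prototiles_ok P.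

Lemma nth_proto0 (k : 'I_K) : nth 0%N (P k) 0 = 0%N.
Proof. by case: (okP k); case: (P k). Qed.

Lemma size_proto_gt0 (k : 'I_K) : (0 < size (P k))%N.
Proof. by case: (okP k); case: (P k). Qed.

Lemma nth_proto_lt_max_len (k : 'I_K) l :
  (l < size (P k))%N -> (nth 0%N (P k) l < max_len P)%N.
Proof.
move=> ltl; case: (okP k) => nonempty _ sorted_lt.
have sorted_le : sorted leq (P k) by apply: sub_sorted sorted_lt => a b /ltnW.
have le_last : (nth 0%N (P k) l <= last 0%N (P k))%N.
  rewrite -nth_last; apply: (sorted_leq_nth leq_trans leqnn 0%N sorted_le) => //.
    by rewrite inE; case: (P k) nonempty.
  by rewrite -ltnS prednK //; case: (P k) nonempty ltl.
apply: leq_trans (leq_bigmax_cond (F := fun k => (last 0%N (P k)).+1) k isT).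
by rewrite ltnS.
Qed.

Lemma consistent_subscripted_tiling x :
  (forall i, in_alphabet P (x i)) -> subscript_consistent x ->
  subscripted_tiling P x.
Proof.
move=> Ax consx.
pose S kt := x kt.2 = (kt.1, 0%N).
have covS i : exists k l, x i = (k, l) /\
    tile_covers P S i k (i - (nth 0%N (P k) l)%:Z) l.
  case xi: (x i) => [k l]; exists k, l; split => //.
  have ltl : (l < size (P k))%N by have := Ax i; rewrite /in_alphabet xi.
  split=> //=; last by rewrite subrK.
  by have := consx i k l 0%N xi (size_proto_gt0 k); rewrite nth_proto0 addr0.
exists S; split=> i; have [k [l [xi covi]]] := covS i; last first.
  by exists k, (i - (nth 0%N (P k) l)%:Z), l.
exists ((k, i - (nth 0%N (P k) l)%:Z), l); split=> // -[[k' t'] l'] [/= St' ltl' ei].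
have := consx t' k' 0%N l' St' ltl'; rewrite nth_proto0 subr0 -ei xi.
by case=> ek el; subst k' l'; rewrite ei addrK.
Qed.

Lemma locally_admissible_consistent x :
  (forall i, in_alphabet P (x i)) ->
  (forall i, exists y m, subscripted_tiling P y /\
     block y m (max_len P) = block x i (max_len P)) ->
  subscript_consistent x.
Proof.
move=> Ax admissible i k l l' xi ltl'.
have ltl : (l < size (P k))%N by have := Ax i; rewrite /in_alphabet xi.
set t := i - _.
have [y [m [Ty blocks_eq]]] := admissible t.
have x_y j : (j < max_len P)%N -> x (t + j%:Z) = y (m + j%:Z).
  by move=> ltj; rewrite -(nth_block (x 0) x t ltj) -blocks_eq nth_block.
have yl : y (m + (nth 0%N (P k) l)%:Z) = (k, l).
  by rewrite -x_y ?nth_proto_lt_max_len // /t subrK.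
have := subscripted_tiling_consistent Ty yl ltl'; rewrite addrK => <-.
by rewrite -x_y ?nth_proto_lt_max_len.
Qed.

Lemma locally_admissible_subscripted_tiling x :
  (forall i, in_alphabet P (x i)) ->
  (forall i, exists y m, subscripted_tiling P y /\
     block y m (max_len P) = block x i (max_len P)) ->
  subscripted_tiling P x.
Proof.
move=> Ax admissible; apply: consistent_subscripted_tiling => //.
exact: locally_admissible_consistent.
Qed.

End SubscriptedTiling.

Theorem mainTheorem3 (K : nat) (P : 'I_K -> seq nat) :
  prototiles_ok P ->
  is_SFT (in_alphabet P) (subscripted_tiling P) /\
  (forall x : int -> 'I_K * nat,
     (forall i : int, in_alphabet P (x i)) ->
     (forall i : int, exists (y : int -> 'I_K * nat) (m : int),
        subscripted_tiling P y /\ block y m (max_len P) = block x i (max_len P)) ->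
     subscripted_tiling P x).
Proof.
move=> okP; have local_rule := locally_admissible_subscripted_tiling okP.
split=> //.
pose alphabet := [seq (k, l) | k <- enum 'I_K, l <- iota 0 (size (P k))].
apply: (is_SFT_of_block_rule (alphabet := alphabet)) local_rule => -[k l] ltl.
by apply/allpairsPdep; exists k, l; rewrite mem_enum mem_iota.
Qed.
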